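(* Let $U\colon\mathcal{E}\to\mathbf{Set}$ be a topological category and $\overline T\colon\mathcal{E}\to\mathcal{E}$ a lifting of a monad $T\colon\mathbf{Set}\to\mathbf{Set}$. Then the category $\mathit{EM}(\overline T)$ of Eilenberg–Moore algebras of $\overline T$ is topological over $\mathit{EM}(T)$ via the functor $V\colon\mathit{EM}(\overline T)\to\mathit{EM}(T)$ sending $(A,a)$ to $(UA,Ua)$.
   Context: A functor $V\colon\mathcal{A}\to\mathcal{C}$ is topological if every $V$-structured source $(f_i\colon C\to VA_i)_{i\in I}$ in $\mathcal{C}$ has a unique $V$-initial lift: an $\mathcal{A}$-object $A$ with morphisms $\bar f_i\colon A\to A_i$, $V\bar f_i=f_i$, such that for every source $(g_i\colon D\to A_i)$ in $\mathcal{A}$ and $\mathcal{C}$-morphism $h\colon VD\to VA$ with $f_i\cdot h=Vg_i$ for all $i$, there is $\bar h\colon D\to A$ with $V\bar h=h$ and $\bar f_i\bar h=g_i$. $\overline T$ lifts $T$: a monad on $\mathcal{E}$ with $U\overline T=TU$ whose unit and multiplication lie over those of $T$. *)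

From Stdlib Require Import FunctionalExtensionality ProofIrrelevance.

(** * Categories (hom-equality is Leibniz equality) *)
Record Category := {
  Ob :> Type;
  Hom : Ob -> Ob -> Type;
  idm : forall A, Hom A A;
  comp : forall A B C, Hom B C -> Hom A B -> Hom A C;
  comp_idl : forall A B (f : Hom A B), comp A B B (idm B) f = f;
  comp_idr : forall A B (f : Hom A B), comp A A B f (idm A) = f;
  comp_assoc : forall A B C D (h : Hom C D) (g : Hom B C) (f : Hom A B),
      comp A C D h (comp A B C g f) = comp A B D (comp B C D h g) f }.
Arguments Hom {c} _ _.
Arguments idm {c} A.
Arguments comp {c A B C} _ _.
Arguments comp_idl {c A B} f.
Arguments comp_idr {c A B} f.
Arguments comp_assoc {c A B C D} h g f.
Notation "g ∘ f" := (comp g f) (at level 40, left associativity).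

Record Functor (C D : Category) := {
  Fob : C -> D;
  Fmap : forall (A B : C), Hom A B -> Hom (Fob A) (Fob B);
  Fmap_id : forall A, Fmap A A (idm A) = idm (Fob A);
  Fmap_comp : forall A B X (g : Hom B X) (f : Hom A B),
      Fmap A X (g ∘ f) = Fmap B X g ∘ Fmap A B f }.
Arguments Fob {C D} _ _.
Arguments Fmap {C D} _ {A B} _.
Arguments Fmap_id {C D} _ A.
Arguments Fmap_comp {C D} _ {A B X} g _.

Record Monad (C : Category) := {
  MF : Functor C C;
  eta : forall X, Hom X (Fob MF X);
  mu : forall X, Hom (Fob MF (Fob MF X)) (Fob MF X);
  eta_nat : forall X Y (f : Hom X Y), Fmap MF f ∘ eta X = eta Y ∘ f;
  mu_nat : forall X Y (f : Hom X Y),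
      Fmap MF f ∘ mu X = mu Y ∘ Fmap MF (Fmap MF f);
  mu_eta_l : forall X, mu X ∘ eta (Fob MF X) = idm (Fob MF X);
  mu_eta_r : forall X, mu X ∘ Fmap MF (eta X) = idm (Fob MF X);
  mu_assoc : forall X, mu X ∘ mu (Fob MF X) = mu X ∘ Fmap MF (mu X) }.
Arguments MF {C} m.
Arguments eta {C} m X.
Arguments mu {C} m X.

Definition SetCat : Category :=
  {| Ob := Type;
     Hom := fun X Y => X -> Y;
     idm := fun X x => x;
     comp := fun _ _ _ g f x => g (f x);
     comp_idl := fun _ _ _ => eq_refl;
     comp_idr := fun _ _ _ => eq_refl;
     comp_assoc := fun _ _ _ _ _ _ _ => eq_refl |}.

Definition eqhom {C : Category} {X Y : C} (e : X = Y) : Hom X Y :=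
  match e in _ = Z return Hom X Z with eq_refl => idm X end.

Lemma eqhom_inv_l {C : Category} {X Y : C} (e : X = Y) :
  eqhom (eq_sym e) ∘ eqhom e = idm X.
Proof. destruct e; simpl; apply comp_idl. Qed.

Lemma eqhom_inv_r {C : Category} {X Y : C} (e : X = Y) :
  eqhom e ∘ eqhom (eq_sym e) = idm Y.
Proof. destruct e; simpl; apply comp_idl. Qed.

Lemma iso_move {C : Category} {X Y Z : C} (c : Hom X Y) (c' : Hom Y X)
  (H : c' ∘ c = idm X) (x : Hom Z X) (y : Hom Z Y) :
  c ∘ x = y -> x = c' ∘ y.
Proof.
  intros <-. rewrite comp_assoc, H, comp_idl. reflexivity.
Qed.

(** * Liftings:  Tb is a lifting of T along U when U Tb = T U (strictly, the
    object equality being recorded by [lift_ob] and morphisms transported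
    along it), and the unit and multiplication of Tb lie over those of T. *)
Record IsLifting {E C : Category} (U : Functor E C) (T : Monad C) (Tb : Monad E)
  : Prop := {
  lift_ob : forall A, Fob U (Fob (MF Tb) A) = Fob (MF T) (Fob U A);
  lift_map : forall A B (f : Hom A B),
      eqhom (lift_ob B) ∘ Fmap U (Fmap (MF Tb) f)
      = Fmap (MF T) (Fmap U f) ∘ eqhom (lift_ob A);
  lift_eta : forall A, eqhom (lift_ob A) ∘ Fmap U (eta Tb A) = eta T (Fob U A);
  lift_mu : forall A,
      eqhom (lift_ob A) ∘ Fmap U (mu Tb A)
      = mu T (Fob U A) ∘ Fmap (MF T) (eqhom (lift_ob A))
        ∘ eqhom (lift_ob (Fob (MF Tb) A)) }.
Arguments lift_ob {E C U T Tb} i A.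
Arguments lift_map {E C U T Tb} i {A B} f.
Arguments lift_eta {E C U T Tb} i A.
Arguments lift_mu {E C U T Tb} i A.

Record EMob {C : Category} (T : Monad C) := {
  carrier : C;
  str : Hom (Fob (MF T) carrier) carrier;
  str_eta : str ∘ eta T carrier = idm carrier;
  str_mu : str ∘ mu T carrier = str ∘ Fmap (MF T) str }.
Arguments carrier {C T} e.
Arguments str {C T} e.

Definition EMhom {C : Category} (T : Monad C) (X Y : EMob T) :=
  { f : Hom (carrier X) (carrier Y) | f ∘ str X = str Y ∘ Fmap (MF T) f }.

Lemma EMhom_eq {C : Category} (T : Monad C) (X Y : EMob T) (f g : EMhom T X Y) :
  proj1_sig f = proj1_sig g -> f = g.
Proof.
  destruct f as [f Hf], g as [g Hg]; simpl; intros ->.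
  f_equal; apply proof_irrelevance.
Qed.

Definition EMid {C : Category} (T : Monad C) (X : EMob T) : EMhom T X X.
Proof.
  exists (idm (carrier X)).
  rewrite Fmap_id, comp_idl, comp_idr; reflexivity.
Defined.

Definition EMcomp {C : Category} (T : Monad C) (X Y Z : EMob T)
  (g : EMhom T Y Z) (f : EMhom T X Y) : EMhom T X Z.
Proof.
  exists (proj1_sig g ∘ proj1_sig f).
  destruct g as [g Hg], f as [f Hf]; simpl.
  rewrite <- comp_assoc, Hf, comp_assoc, Hg, <- comp_assoc, <- Fmap_comp.
  reflexivity.
Defined.

Definition EM {C : Category} (T : Monad C) : Category.
Proof.
  refine {| Ob := EMob T; Hom := EMhom T; idm := EMid T; comp := EMcomp T |}.
  - intros; apply EMhom_eq; simpl; apply comp_idl.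
  - intros; apply EMhom_eq; simpl; apply comp_idr.
  - intros; apply EMhom_eq; simpl; apply comp_assoc.
Defined.

(** * The comparison functor V : EM(Tb) -> EM(T),  (A, a) |-> (UA, Ua)
    (Ua : U(Tb A) -> UA, read as a map T(UA) -> UA via U Tb = T U). *)
Section LiftedEM.
Context {E C : Category} (U : Functor E C) (T : Monad C) (Tb : Monad E)
        (L : IsLifting U T Tb).

Local Notation k A := (eqhom (lift_ob L A)).
Local Notation kk A := (eqhom (eq_sym (lift_ob L A))).

Lemma lift_eta' (A : E) : Fmap U (eta Tb A) = kk A ∘ eta T (Fob U A).
Proof. apply (iso_move (k A)); [apply eqhom_inv_l | apply lift_eta]. Qed.

Lemma lift_nat' (A B : E) (f : Hom A B) :
  Fmap U (Fmap (MF Tb) f) ∘ kk A = kk B ∘ Fmap (MF T) (Fmap U f).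
Proof.
  apply (iso_move (k B)); [apply eqhom_inv_l |].
  rewrite comp_assoc. rewrite (lift_map L f).
  rewrite <- comp_assoc. 
  rewrite eqhom_inv_r, comp_idr. reflexivity.
Qed.

Lemma lift_mu' (A : E) :
  kk A ∘ mu T (Fob U A)
  = Fmap U (mu Tb A) ∘ kk (Fob (MF Tb) A) ∘ Fmap (MF T) (kk A).
Proof.
  symmetry.
  rewrite (iso_move _ _ (eqhom_inv_l _) _ _ (lift_mu L A)).
  rewrite <- !comp_assoc.
  rewrite (comp_assoc (eqhom (lift_ob L (Fob (MF Tb) A)))), eqhom_inv_r, comp_idl.
  rewrite <- Fmap_comp, eqhom_inv_r, Fmap_id, comp_idr. reflexivity.
Qed.

Definition Vob (X : EMob Tb) : EMob T.
Proof.
  refine {| carrier := Fob U (carrier X);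
            str := Fmap U (str X) ∘ kk (carrier X) |}.
  - rewrite <- comp_assoc, <- lift_eta', <- Fmap_comp, str_eta, Fmap_id.
    reflexivity.
  - rewrite <- comp_assoc, lift_mu', !comp_assoc, <- Fmap_comp, str_mu, Fmap_comp.
    rewrite <- (comp_assoc (Fmap U (str X))), <- (comp_assoc (Fmap U (str X))).
    rewrite lift_nat', Fmap_comp, !comp_assoc. reflexivity.
Defined.

Definition Vmap (X Y : EMob Tb) (f : EMhom Tb X Y) : EMhom T (Vob X) (Vob Y).
Proof.
  exists (Fmap U (proj1_sig f)).
  destruct f as [f Hf]; simpl.
  rewrite comp_assoc, <- Fmap_comp, Hf, Fmap_comp, <- comp_assoc, lift_nat'.
  rewrite comp_assoc. reflexivity.
Defined.

Definition EMV : Functor (EM Tb) (EM T).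
Proof.
  refine (Build_Functor (EM Tb) (EM T) Vob Vmap _ _).
  - intros; apply EMhom_eq; simpl; apply Fmap_id.
  - intros; apply EMhom_eq; simpl; apply Fmap_comp.
Defined.
End LiftedEM.

Section Topological.
Context {A C : Category} (V : Functor A C).

Record Lift (I : Type) (X : C) (Ai : I -> A) (f : forall i, Hom X (Fob V (Ai i))) := {
  lob : A;
  leq : Fob V lob = X;
  lmor : forall i, Hom lob (Ai i);
  lover : forall i, Fmap V (lmor i) = f i ∘ eqhom leq }.

Definition is_initial_lift (I : Type) (X : C) (Ai : I -> A)
  (f : forall i, Hom X (Fob V (Ai i))) (L : Lift I X Ai f) : Prop :=
  forall (D : A) (g : forall i, Hom D (Ai i)) (h : Hom (Fob V D) X),
    (forall i, f i ∘ h = Fmap V (g i)) ->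
    exists hb : Hom D (lob _ _ _ _ L),
      eqhom (leq _ _ _ _ L) ∘ Fmap V hb = h /\
      forall i, lmor _ _ _ _ L i ∘ hb = g i.

Definition topological : Prop :=
  forall (I : Type) (X : C) (Ai : I -> A) (f : forall i, Hom X (Fob V (Ai i))),
    exists L : Lift I X Ai f,
      is_initial_lift I X Ai f L /\
      forall L' : Lift I X Ai f, is_initial_lift I X Ai f L' -> L' = L.
End Topological.

(** A topological functor is faithful: swapping the two legs of the initial
    lift of a constant two-element source gives another initial lift, so by
    uniqueness the legs agree.  Given a source [f_i : (X, s) -> V (A_i, a_i)],
    the U-initial lift [m_i : A -> A_i] of the underlying source carries a
    structure [a : Tb A -> A] over [s], obtained from initiality against the
    maps [a_i ∘ Tb m_i]; faithfulness of [U] transfers the algebra laws from [s] to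
    [a] and makes every mediating map a homomorphism.  The underlying lift of
    any other V-initial lift receives a comparison map from [A], so it is
    U-initial and equals [A]; faithfulness then identifies the structures.
    Nothing specific to [Set] is used. *)
From Stdlib Require Import FunctionalExtensionality ProofIrrelevance Eqdep Bool.

#[local] Arguments lob {A C V I X Ai f} _.
#[local] Arguments leq {A C V I X Ai f} _.
#[local] Arguments lmor {A C V I X Ai f} _ _.
#[local] Arguments lover {A C V I X Ai f} _ _.

Lemma eqhom_cancel_l {C : Category} {X Y Z : C} (e : Y = Z) (x y : Hom X Y) :
  eqhom e ∘ x = eqhom e ∘ y -> x = y.
Proof. destruct e; cbn; rewrite !comp_idl; trivial. Qed.

Lemma eqhom_cancel_r {C : Category} {X Y Z : C} (e : X = Y) (x y : Hom Y Z) :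
  x ∘ eqhom e = y ∘ eqhom e -> x = y.
Proof. destruct e; cbn; rewrite !comp_idr; trivial. Qed.

Lemma eqhom_refl {C : Category} {X : C} (e : X = X) : eqhom e = idm X.
Proof. now rewrite (proof_irrelevance _ e eq_refl). Qed.

Section Topological.
Context {A C : Category} (V : Functor A C).

Definition initial_source {I : Type} {B : A} (Ai : I -> A)
  (m : forall i, Hom B (Ai i)) : Prop :=
  forall (D : A) (g : forall i, Hom D (Ai i)) (h : Hom (Fob V D) (Fob V B)),
    (forall i, Fmap V (m i) ∘ h = Fmap V (g i)) ->
    exists hb : Hom D B, Fmap V hb = h /\ forall i, m i ∘ hb = g i.

Context {I : Type} {X : C} {Ai : I -> A} {f : forall i, Hom X (Fob V (Ai i))}.

Lemma Lift_eq (B : A) (e1 e2 : Fob V B = X) (m1 m2 : forall i, Hom B (Ai i)) o1 o2 :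
  m1 = m2 -> Build_Lift V I X Ai f B e1 m1 o1 = Build_Lift V I X Ai f B e2 m2 o2.
Proof.
  intros <-. destruct (proof_irrelevance _ e1 e2).
  f_equal; apply proof_irrelevance.
Qed.

Lemma Lift_lmor_inj (B : A) e1 e2 (m1 m2 : forall i, Hom B (Ai i)) o1 o2 :
  Build_Lift V I X Ai f B e1 m1 o1 = Build_Lift V I X Ai f B e2 m2 o2 -> m1 = m2.
Proof.
  intros H. apply (inj_pair2 _ (fun B => forall i, Hom B (Ai i)) B).
  exact (f_equal (fun M => existT _ (lob M) (lmor M)) H).
Qed.

Lemma is_initial_lift_iff_source (L : Lift V I X Ai f) :
  is_initial_lift V I X Ai f L <-> initial_source Ai (lmor L).
Proof.
  split.
  - intros L_init D g h Hgh.
    destruct (L_init D g (eqhom (leq L) ∘ h)) as [hb [Hhb legs]].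
    { intro i. rewrite comp_assoc, <- lover. apply Hgh. }
    exists hb. split; [exact (eqhom_cancel_l _ _ _ Hhb) | exact legs].
  - intros L_init D g h Hgh.
    destruct (L_init D g (eqhom (eq_sym (leq L)) ∘ h)) as [hb [Hhb legs]].
    { intro i. rewrite lover, <- comp_assoc, (comp_assoc (eqhom _)).
      rewrite eqhom_inv_r, comp_idl. apply Hgh. }
    exists hb. split; [| exact legs].
    rewrite Hhb, comp_assoc, eqhom_inv_r. apply comp_idl.
Qed.

Lemma is_initial_lift_transfer (L1 L2 : Lift V I X Ai f) (psi : Hom (lob L1) (lob L2)) :
  eqhom (leq L2) ∘ Fmap V psi = eqhom (leq L1) ->
  (forall i, lmor L2 i ∘ psi = lmor L1 i) ->
  is_initial_lift V I X Ai f L1 -> is_initial_lift V I X Ai f L2.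
Proof.
  intros psi_over psi_legs L1_init D g h Hgh.
  destruct (L1_init D g h Hgh) as [hb [Hhb legs]].
  exists (psi ∘ hb). split.
  - now rewrite Fmap_comp, comp_assoc, psi_over.
  - intro i. now rewrite comp_assoc, psi_legs.
Qed.

End Topological.

Lemma topological_faithful {A C : Category} (V : Functor A C) :
  topological V -> forall (B D : A) (g h : Hom B D), Fmap V g = Fmap V h -> g = h.
Proof.
  intros HV B D g h Hgh.
  destruct (HV bool (Fob V B) (fun _ => D) (fun _ => Fmap V g))
    as [[P e m over] [P_init P_uniq]].
  assert (m_swap : (fun b => m (negb b)) = m).
  { apply (Lift_lmor_inj V P e e _ _ (fun b => over (negb b)) over), P_uniq.
    intros D' g' h' Hgh'.
    destruct (P_init D' (fun b => g' (negb b)) h' (fun b => Hgh' (negb b)))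
      as [hb [Hhb legs]].
    exists hb. split; [exact Hhb |].
    intro b. cbn. now rewrite legs, negb_involutive. }
  destruct (P_init B (fun b => if b then g else h) (idm _)) as [hb [_ legs]].
  { intros []; rewrite comp_idr; [reflexivity | exact Hgh]. }
  pose proof (equal_f m_swap true) as m_false. cbn in m_false.
  rewrite <- (legs true), <- (legs false). cbn. now rewrite m_false.
Qed.

Lemma EMob_eq {C : Category} (T : Monad C) (c : C) s1 s2 p1 p2 q1 q2 :
  s1 = s2 -> Build_EMob C T c s1 p1 p2 = Build_EMob C T c s2 q1 q2.
Proof. intros <-. f_equal; apply proof_irrelevance. Qed.

Lemma EMob_str_inj {C : Category} (T : Monad C) (c : C) s1 s2 p1 p2 q1 q2 :
  Build_EMob C T c s1 p1 p2 = Build_EMob C T c s2 q1 q2 -> s1 = s2.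
Proof.
  intros H. apply (inj_pair2 _ (fun c => Hom (Fob (MF T) c) c) c).
  exact (f_equal (fun Y : EMob T => existT (fun c => Hom (Fob (MF T) c) c) (carrier Y) (str Y)) H).
Qed.

Lemma eqhom_EM {C : Category} (T : Monad C) (X Y : EMob T) (e : X = Y) :
  proj1_sig (@eqhom (EM T) X Y e) = eqhom (f_equal carrier e).
Proof. now destruct e. Qed.

Section LiftedEM.
Context {E C : Category} (U : Functor E C) (T : Monad C) (Tb : Monad E)
        (L : IsLifting U T Tb).
Hypothesis U_faithful : forall (B D : E) (g h : Hom B D), Fmap U g = Fmap U h -> g = h.

Local Notation k A := (eqhom (lift_ob L A)).
Local Notation kk A := (eqhom (eq_sym (lift_ob L A))).
Local Notation V := (EMV U T Tb L).
Local Notation Vob := (Vob U T Tb L).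

Lemma lifted_structure_inj (A : E) (a1 a2 : Hom (Fob (MF Tb) A) A) :
  Fmap U a1 ∘ kk A = Fmap U a2 ∘ kk A -> a1 = a2.
Proof. intros H. exact (U_faithful _ _ _ _ (eqhom_cancel_r _ _ _ H)). Qed.

Lemma EMhom_of_Vhom (B D : EMob Tb) (g : Hom (carrier B) (carrier D)) :
  Fmap U g ∘ str (Vob B) = str (Vob D) ∘ Fmap (MF T) (Fmap U g) ->
  g ∘ str B = str D ∘ Fmap (MF Tb) g.
Proof.
  cbn. intros H. apply U_faithful, (eqhom_cancel_r (eq_sym (lift_ob L (carrier B)))).
  rewrite !Fmap_comp, <- !comp_assoc, lift_nat', H.
  symmetry. apply comp_assoc.
Qed.

Lemma lifted_algebra_laws (A : E) (a : Hom (Fob (MF Tb) A) A)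
  (s : Hom (Fob (MF T) (Fob U A)) (Fob U A)) :
  Fmap U a = s ∘ k A ->
  s ∘ eta T (Fob U A) = idm _ -> s ∘ mu T (Fob U A) = s ∘ Fmap (MF T) s ->
  a ∘ eta Tb A = idm A /\ a ∘ mu Tb A = a ∘ Fmap (MF Tb) a.
Proof.
  intros Ua s_eta s_mu. split; apply U_faithful.
  - rewrite Fmap_comp, Fmap_id, Ua, <- comp_assoc, lift_eta. exact s_eta.
  - rewrite !Fmap_comp, Ua, <- !comp_assoc, lift_mu, lift_map, Ua, Fmap_comp.
    rewrite !comp_assoc, s_mu. reflexivity.
Qed.

Lemma lifted_structure_exists {I : Type} (Ai : I -> EMob Tb) (A : E)
  (m : forall i, Hom A (carrier (Ai i))) (s : Hom (Fob (MF T) (Fob U A)) (Fob U A)) :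
  initial_source U (fun i => carrier (Ai i)) m ->
  (forall i, Fmap U (m i) ∘ s = str (Vob (Ai i)) ∘ Fmap (MF T) (Fmap U (m i))) ->
  exists a, Fmap U a = s ∘ k A /\ forall i, m i ∘ a = str (Ai i) ∘ Fmap (MF Tb) (m i).
Proof.
  intros m_init m_hom.
  apply (m_init _ (fun i => str (Ai i) ∘ Fmap (MF Tb) (m i))).
  intro i. cbn in m_hom.
  rewrite comp_assoc, m_hom, Fmap_comp, <- !comp_assoc, <- lift_map.
  now rewrite (comp_assoc (kk _)), eqhom_inv_l, comp_idl.
Qed.

Lemma EM_initial_source {I : Type} (Ai : I -> EMob Tb) (B : EMob Tb)
  (m : forall i, EMhom Tb B (Ai i)) :
  initial_source U (fun i => carrier (Ai i)) (fun i => proj1_sig (m i)) ->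
  initial_source V (B := B) Ai m.
Proof.
  intros m_init D g h Hgh.
  destruct (m_init (carrier D) (fun i => proj1_sig (g i)) (proj1_sig h)) as [hb [Uhb legs]].
  { intro i. exact (f_equal (@proj1_sig _ _) (Hgh i)). }
  assert (hb_hom : hb ∘ str D = str B ∘ Fmap (MF Tb) hb).
  { apply EMhom_of_Vhom. rewrite Uhb. exact (proj2_sig h). }
  exists (exist _ hb hb_hom). split.
  - apply EMhom_eq. exact Uhb.
  - intro i. apply EMhom_eq. exact (legs i).
Qed.

Section UnderlyingLift.
Context {I : Type} {X : EMob T} {Ai : I -> EMob Tb}
        {f : forall i, EMhom T X (Vob (Ai i))}.

Lemma underlying_lover (LV : Lift V I X Ai f) (i : I) :
  Fmap U (proj1_sig (lmor LV i)) = proj1_sig (f i) ∘ eqhom (f_equal carrier (leq LV)).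
Proof. rewrite <- eqhom_EM. exact (f_equal (@proj1_sig _ _) (lover LV i)). Qed.

Definition underlying_lift (LV : Lift V I X Ai f) :
  Lift U I (carrier X) (fun i => carrier (Ai i)) (fun i => proj1_sig (f i)) :=
  {| lob := carrier (lob LV);
     leq := f_equal carrier (leq LV);
     lmor := fun i => proj1_sig (lmor LV i);
     lover := underlying_lover LV |}.

Lemma underlying_lift_inj (LV1 LV2 : Lift V I X Ai f) :
  underlying_lift LV1 = underlying_lift LV2 -> LV1 = LV2.
Proof.
  destruct LV1 as [[A a1 a1_eta a1_mu] e1 m1 o1], LV2 as [[A2 a2 a2_eta a2_mu] e2 m2 o2].
  intros H. pose proof (f_equal lob H) as HA. cbn in HA. subst A2.
  apply Lift_lmor_inj in H.
  assert (a1 = a2) as <-.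
  { apply lifted_structure_inj. eapply EMob_str_inj.
    exact (eq_trans e1 (eq_sym e2)). }
  destruct (proof_irrelevance _ a1_eta a2_eta), (proof_irrelevance _ a1_mu a2_mu).
  apply Lift_eq, functional_extensionality_dep. intro i.
  apply EMhom_eq. exact (f_equal (fun m => m i) H).
Qed.

Lemma underlying_lift_initial (LV1 LV2 : Lift V I X Ai f) :
  is_initial_lift U _ _ _ _ (underlying_lift LV1) ->
  is_initial_lift V _ _ _ _ LV2 ->
  is_initial_lift U _ _ _ _ (underlying_lift LV2).
Proof.
  intros LV1_init LV2_init.
  destruct (LV2_init (lob LV1) (lmor LV1) (eqhom (leq LV1))) as [psi [psi_over psi_legs]].
  { intro i. symmetry. apply lover. }
  apply (is_initial_lift_transfer U (underlying_lift LV1) (underlying_lift LV2) (proj1_sig psi));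
    [| | exact LV1_init].
  - pose proof (f_equal (@proj1_sig _ _) psi_over) as Upsi_over.
    change (proj1_sig (@eqhom (EM T) _ _ (leq LV2)) ∘ Fmap U (proj1_sig psi)
            = proj1_sig (@eqhom (EM T) _ _ (leq LV1))) in Upsi_over.
    rewrite !eqhom_EM in Upsi_over. exact Upsi_over.
  - intro i. exact (f_equal (@proj1_sig _ _) (psi_legs i)).
Qed.

End UnderlyingLift.

Lemma EM_initial_lift_exists {I : Type} (X : EMob T) (Ai : I -> EMob Tb)
  (f : forall i, EMhom T X (Vob (Ai i)))
  (L0 : Lift U I (carrier X) (fun i => carrier (Ai i)) (fun i => proj1_sig (f i))) :
  is_initial_lift U _ _ _ _ L0 ->
  exists LV : Lift V I X Ai f, is_initial_lift V _ _ _ _ LV /\ underlying_lift LV = L0.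
Proof.
  intros L0_init.
  pose proof (proj1 (is_initial_lift_iff_source U L0) L0_init) as m_init.
  destruct X as [cX s s_eta s_mu], L0 as [A e m over]. cbn in e. subst cX. cbn in *.
  assert (m_hom : forall i, Fmap U (m i) ∘ s = str (Vob (Ai i)) ∘ Fmap (MF T) (Fmap U (m i))).
  { intro i. rewrite over, comp_idr. exact (proj2_sig (f i)). }
  destruct (lifted_structure_exists Ai A m s m_init m_hom) as [a [Ua m_alg]].
  destruct (lifted_algebra_laws A a s Ua s_eta s_mu) as [a_eta a_mu].
  set (B := Build_EMob E Tb A a a_eta a_mu).
  assert (VB : Vob B = Build_EMob C T (Fob U A) s s_eta s_mu).
  { apply EMob_eq. cbn. now rewrite Ua, <- comp_assoc, eqhom_inv_r, comp_idr. }
  set (mV := fun i => exist _ (m i) (m_alg i) : EMhom Tb B (Ai i)).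
  assert (mV_over : forall i, Fmap V (mV i) = @comp (EM T) _ _ _ (f i) (@eqhom (EM T) _ _ VB)).
  { intro i. apply EMhom_eq.
    change (Fmap U (m i) = proj1_sig (f i) ∘ proj1_sig (@eqhom (EM T) _ _ VB)).
    now rewrite eqhom_EM, eqhom_refl, over. }
  exists (Build_Lift V I _ Ai f B VB mV mV_over). split.
  - apply is_initial_lift_iff_source, EM_initial_source. exact m_init.
  - apply Lift_eq. reflexivity.
Qed.

End LiftedEM.

Theorem lemma4 (E : Category) (U : Functor E SetCat) (T : Monad SetCat)
  (Tb : Monad E) (L : IsLifting U T Tb) :
  topological U -> topological (EMV U T Tb L).
Proof.
  intros HU I X Ai f.
  pose proof (topological_faithful U HU) as U_faithful.
  destruct (HU I (carrier X) (fun i => carrier (Ai i)) (fun i => proj1_sig (f i)))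
    as [L0 [L0_init L0_uniq]].
  destruct (EM_initial_lift_exists U T Tb L U_faithful X Ai f L0 L0_init) as [LV [LV_init LV_L0]].
  exists LV. split; [exact LV_init |].
  intros L' L'_init.
  apply (underlying_lift_inj U T Tb L U_faithful).
  rewrite LV_L0. apply L0_uniq.
  apply (underlying_lift_initial U T Tb L LV); [rewrite LV_L0 |]; assumption.
Qed.
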